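(* Let $\alpha_1,\dots,\alpha_4$ be constants, $H=H(t,t^-,q,q^-,p,p^-)$ smooth, and $X=\xi\partial_t+\eta\partial_q+\nu\partial_p$ (coefficients functions of $(t,q,p)$) such that $\Omega=0$. Let $C$ and $P$ be as defined below. If, on the solutions of the local extremal equation $F_H=\xi\frac{\delta\tilde H}{\delta t}+\eta\frac{\delta\tilde H}{\delta q}+\nu\frac{\delta\tilde H}{\delta p}=0$, one has $(S_+-1)P=D(V)$ for some function $V(t^+,t,t^-,q^+,q,q^-,p^+,p,p^-)$, then $I=C-V$ is a differential first integral, i.e. $D(I)=0$ on the solutions of $F_H=0$.
   Context: Constant delay $\tau>0$; $t^\pm=t\pm\tau$, $f^\pm=f(t\pm\tau)$; scalar $q,p$. $S_\pm$ are the forward/backward shift operators on expressions; $\xi^\pm=S_\pm(\xi)$ etc.; $H^+=S_+(H)$. $D$ is the total derivative acting on variables at $t^-,t,t^+$. $\tilde H=p^{-}(\alpha_{1}\dot{q}+\alpha_{2}\dot{q}^{-})+p(\alpha_{3}\dot{q}+\alpha_{4}\dot{q}^{-})-H$; $\frac{\delta\tilde H}{\delta p}=\alpha_1\dot q^++(\alpha_2+\alpha_3)\dot q+\alpha_4\dot q^--\partial_p(H+H^+)$, $\frac{\delta\tilde H}{\delta q}=-\big(\alpha_4\dot p^++(\alpha_2+\alpha_3)\dot p+\alpha_1\dot p^-+\partial_q(H+H^+)\big)$, $\frac{\delta\tilde H}{\delta t}=D[\alpha_2(p\dot q-p^-\dot q^-)+\alpha_4(p^+\dot q-p\dot q^-)]+D(H)-\partial_t(H+H^+)$.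 $\Omega=\nu^{-}(\alpha_{1}\dot{q}+\alpha_{2}\dot{q}^{-})+p^{-}(\alpha_{1}D(\eta)+\alpha_{2}D(\eta^{-}))+\nu(\alpha_{3}\dot{q}+\alpha_{4}\dot{q}^{-})+p(\alpha_{3}D(\eta)+\alpha_{4}D(\eta^{-}))+(\alpha_{2}p^{-}+\alpha_{4}p)\dot{q}^{-}D(\xi-\xi^{-})-\xi H_t-\eta H_q-\nu H_p-\xi^{-}H_{t^-}-\eta^{-}H_{q^-}-\nu^{-}H_{p^-}-HD(\xi)$ (invariance condition of the Hamiltonian). $C=\eta(\alpha_{4}p^{+}+(\alpha_{2}+\alpha_{3})p+\alpha_{1}p^{-})-\xi\big(\alpha_{2}(p\dot{q}-p^{-}\dot{q}^{-})+\alpha_{4}(p^{+}\dot{q}-p\dot{q}^{-})+H\big)$, $P=(\alpha_{2}p^{-}+\alpha_{4}p)D(\eta^{-})+\nu^{-}(\alpha_{1}\dot{q}+\alpha_{2}\dot{q}^{-})-(\alpha_{2}p^{-}+\alpha_{4}p)\dot{q}^{-}D(\xi^{-})-\xi^{-}H_{t^-}-\eta^{-}H_{q^-}-\nu^{-}H_{p^-}$. Equations are considered with $t^+-t=t-t^-=\tau$. *)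

From HB Require Import structures.
From mathcomp Require Import all_boot all_order all_algebra.
From mathcomp Require Import all_classical all_reals all_analysis.

Import Order.TTheory GRing.Theory Num.Theory.
Import numFieldNormedType.Exports.
Local Open Scope ring_scope.

Section Delay.
Variable R : realType.

Definition vec3 (a b c : R) : 'rV[R]_3 := \row_(i < 3) nth 0 [:: a; b; c] i.
Definition vec6 (a b c d e f : R) : 'rV[R]_6 :=
  \row_(i < 6) nth 0 [:: a; b; c; d; e; f] i.
Definition vec9 (a b c d e f g h k : R) : 'rV[R]_9 :=
  \row_(i < 9) nth 0 [:: a; b; c; d; e; f; g; h; k] i.

Definition partial {n : nat} (i : 'I_n) (f : 'rV[R]_n -> R) : 'rV[R]_n -> R :=
  fun x => 'D_(delta_mx 0 i) f x.

Fixpoint iter_partial {n : nat} (l : seq 'I_n) (f : 'rV[R]_n -> R) :=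
  match l with
  | [::] => f
  | i :: l' => partial i (iter_partial l' f)
  end.

Definition smooth {n : nat} (f : 'rV[R]_n -> R) : Prop :=
  forall l : seq 'I_n, continuous (iter_partial l f) /\
    forall (i : 'I_n) (x : 'rV[R]_n), derivable (iter_partial l f) x (delta_mx 0 i).

Definition smooth1 (f : R -> R) : Prop :=
  forall (n : nat) (x : R), derivable (derive1n n f) x 1.

Section Traj.
Variables (a1 a2 a3 a4 tau : R).
Variables (H : 'rV[R]_6 -> R) (xi eta nu : 'rV[R]_3 -> R).
Variables (q p : R -> R).

Definition pt3 (s : R) : 'rV[R]_3 := vec3 s (q s) (p s).
Definition pt6 (s : R) : 'rV[R]_6 :=
  vec6 s (s - tau) (q s) (q (s - tau)) (p s) (p (s - tau)).

Definition cmp3 (g : 'rV[R]_3 -> R) (s : R) : R := g (pt3 s).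
Definition sh3 (g : 'rV[R]_3 -> R) (s : R) : R := g (pt3 (s - tau)).

Definition qd (s : R) : R := derive1 q s.
Definition pd (s : R) : R := derive1 p s.

(* partial derivatives of H, variables ordered (t, t^-, q, q^-, p, p^-),
   i.e. H_t = dlHk 0, H_{t^-} = dlHk 1, H_q = dlHk 2, H_{q^-} = dlHk 3,
   H_p = dlHk 4, H_{p^-} = dlHk 5, evaluated at the point of time s *)
Definition dlHk (k : nat) (s : R) : R := partial (inord k : 'I_6) H (pt6 s).

Definition dlOmega (t : R) : R :=
  sh3 nu t * (a1 * qd t + a2 * qd (t - tau))
  + p (t - tau) * (a1 * derive1 (cmp3 eta) t + a2 * derive1 (sh3 eta) t)
  + cmp3 nu t * (a3 * qd t + a4 * qd (t - tau))
  + p t * (a3 * derive1 (cmp3 eta) t + a4 * derive1 (sh3 eta) t)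
  + (a2 * p (t - tau) + a4 * p t) * qd (t - tau)
      * derive1 (fun s => cmp3 xi s - sh3 xi s) t
  - cmp3 xi t * dlHk 0 t - cmp3 eta t * dlHk 2 t - cmp3 nu t * dlHk 4 t
  - sh3 xi t * dlHk 1 t - sh3 eta t * dlHk 3 t - sh3 nu t * dlHk 5 t
  - H (pt6 t) * derive1 (cmp3 xi) t.

(* variational derivatives of tilde H; H^+ = H at pt6 (t + tau) *)
Definition dHt_dp (t : R) : R :=
  a1 * qd (t + tau) + (a2 + a3) * qd t + a4 * qd (t - tau)
  - (dlHk 4 t + dlHk 5 (t + tau)).

Definition dHt_dq (t : R) : R :=
  - (a4 * pd (t + tau) + (a2 + a3) * pd t + a1 * pd (t - tau)
     + (dlHk 2 t + dlHk 3 (t + tau))).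

Definition dHt_dt (t : R) : R :=
  derive1 (fun s => a2 * (p s * qd s - p (s - tau) * qd (s - tau))
                    + a4 * (p (s + tau) * qd s - p s * qd (s - tau))) t
  + derive1 (fun s => H (pt6 s)) t
  - (dlHk 0 t + dlHk 1 (t + tau)).

Definition dlFH (t : R) : R :=
  cmp3 xi t * dHt_dt t + cmp3 eta t * dHt_dq t + cmp3 nu t * dHt_dp t.

Definition dlCfun (t : R) : R :=
  cmp3 eta t * (a4 * p (t + tau) + (a2 + a3) * p t + a1 * p (t - tau))
  - cmp3 xi t * (a2 * (p t * qd t - p (t - tau) * qd (t - tau))
                 + a4 * (p (t + tau) * qd t - p t * qd (t - tau))
                 + H (pt6 t)).

Definition dlPfun (t : R) : R :=
  (a2 * p (t - tau) + a4 * p t) * derive1 (sh3 eta) t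
  + sh3 nu t * (a1 * qd t + a2 * qd (t - tau))
  - (a2 * p (t - tau) + a4 * p t) * qd (t - tau) * derive1 (sh3 xi) t
  - sh3 xi t * dlHk 1 t - sh3 eta t * dlHk 3 t - sh3 nu t * dlHk 5 t.

Definition dlVfun (V : 'rV[R]_9 -> R) (t : R) : R :=
  V (vec9 (t + tau) t (t - tau) (q (t + tau)) (q t) (q (t - tau))
          (p (t + tau)) (p t) (p (t - tau))).

End Traj.
End Delay.

Arguments smooth {R n} f.
Arguments smooth1 {R} f.
Arguments partial {R n} i f x.
Arguments iter_partial {R n} l f x.
Arguments vec3 {R}.
Arguments vec6 {R}.
Arguments vec9 {R}.
Arguments pt3 {R}.
Arguments pt6 {R}.
Arguments cmp3 {R}.
Arguments sh3 {R}.
Arguments qd {R}.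
Arguments pd {R}.
Arguments dlHk {R}.
Arguments dlOmega {R}.
Arguments dHt_dp {R}.
Arguments dHt_dq {R}.
Arguments dHt_dt {R}.
Arguments dlFH {R}.
Arguments dlCfun {R}.
Arguments dlPfun {R}.
Arguments dlVfun {R}.

From HB Require Import structures.
From mathcomp Require Import all_boot all_order all_algebra.
From mathcomp Require Import all_classical all_reals all_analysis.
From mathcomp Require Import ring.
Import Order.TTheory GRing.Theory Num.Theory.
Import numFieldNormedType.Exports.
Local Open Scope ring_scope.
Local Open Scope classical_set_scope.

(* Write C = eta * momentum - xi * energy.  By the product rule,
   D(C) - (S_+ - 1) P equals Omega - F_H: once the derivatives of xi and eta
   along the trajectory and the partial derivatives of H are treated as
   independent quantities, this is a polynomial identity, in which the terms of
   P(t + tau) supply the H^+ parts of the variational derivatives.  Hence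
   Omega = 0 and F_H = 0 give D(C) = (S_+ - 1) P = D(V).  The only analytic
   input is that a smooth H composed with a differentiable curve is
   differentiable, which rests on continuous partial derivatives implying
   differentiability. *)

Lemma differentiable_of_flat (R : realType) (V W : normedModType R) (g : V -> W) x :
  (forall eps : R, 0 < eps ->
     \forall h \near (0 : V), `|g (h + x) - g x| <= eps * `|h|) ->
  differentiable g x.
Proof.
move=> flat.
have cont0 : continuous (\0 : {linear V -> W}) by move=> ?; apply: cst_continuous.
have dg : g \o shift x = cst (g x) + (\0 : {linear V -> W}) +o_ 0 id.
  apply/eqaddoP => eps eps0; apply: filterS (flat eps eps0) => h /=.
  by rewrite /GRing.null_fun /= addr0.
by apply/diff_locallyP; rewrite (diff_unique cont0 dg).
Qed.

Section RealCalculus.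
Context {R : realType}.

Lemma derivable_shift (g : R -> R) c t :
  derivable g (t + c) 1 -> derivable (fun s => g (s + c)) t 1.
Proof.
rewrite /derivable; set g1 := fun h => h^-1 *: _; set g2 := fun h => h^-1 *: _.
suff -> : g2 = g1 by [].
by apply: funext => h; rewrite /g1 /g2 /= addrA.
Qed.

Lemma derive1_shift (g : R -> R) c t :
  derive1 (fun s => g (s + c)) t = derive1 g (t + c).
Proof.
rewrite /derive1; set g1 := fun h => h^-1 *: _; set g2 := fun h => h^-1 *: _.
suff -> : g1 = g2 by [].
by apply: funext => h; rewrite /g1 /g2 /= addrA.
Qed.

Lemma norm_increment_le {psi dpsi : R -> R} {a M : R} :
  (forall s, is_derive s (1 : R) psi (dpsi s)) ->
  (forall s, `|s| <= `|a| -> `|dpsi s| <= M) -> `|psi a - psi 0| <= M * `|a|.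
Proof.
move=> dpsiP Mbound.
have cont u v : {within `[u, v], continuous psi}.
  by apply: derivable_within_continuous => z _; have [] := dpsiP z.
have [a0|a0] := leP 0 a.
  have [c /andP[c0 ca] ->] := MVT_segment a0 (fun z _ => dpsiP z) (cont 0 a).
  rewrite normrM subr0 ler_wpM2r //; apply: Mbound.
  by rewrite !ger0_norm // (le_trans c0).
have [c /andP[ac c0] E] := MVT_segment (ltW a0) (fun z _ => dpsiP z) (cont a 0).
rewrite -normrN opprB E normrM sub0r normrN ler_wpM2r //; apply: Mbound.
by rewrite !ler0_norm ?lerN2 // ltW.
Qed.

Lemma is_derive_along_line n (f : 'rV[R]_n -> R) y e s :
  derivable f (y + s *: e) e ->
  is_derive s 1 (fun z => f (y + z *: e)) ('D_e f (y + s *: e)).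
Proof.
move=> df.
have E : (fun h : R => h^-1 *: (((fun z => f (y + z *: e)) \o shift s) (h *: 1)
                                 - f (y + s *: e)))
       = (fun h => h^-1 *: ((f \o shift (y + s *: e)) (h *: e) - f (y + s *: e))).
  by apply: funext => h /=; rewrite [h *: 1]mulr1 scalerDl addrCA addrC.
by split; rewrite /derivable /derive E.
Qed.

Lemma line_increment_le {n} {f : 'rV[R]_n -> R} {y e} {a d eps : R} :
  (forall z, derivable f (y + z *: e) e) ->
  (forall z, `|z| <= `|a| -> `|'D_e f (y + z *: e) - d| <= eps) ->
  `|f (y + a *: e) - f y - a * d| <= eps * `|a|.
Proof.
move=> df near_d.
have dpsi z : is_derive z (1 : R) (fun z => f (y + z *: e) - z * d)
                            ('D_e f (y + z *: e) - d).
  apply: is_deriveB; first exact: is_derive_along_line.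
  apply: is_derive_eq.
  by rewrite scaler0 add0r [d%:A]mulr1.
by have := norm_increment_le dpsi near_d; rewrite scale0r addr0 mul0r subr0 addrAC.
Qed.

Lemma row_norm_le n (v : 'rV[R]_n) r :
  0 <= r -> (forall i, `|v 0 i| <= r) -> `|v| <= r.
Proof.
move=> r0 vr; rewrite /Num.Def.normr /= mx_normrE.
by apply: bigmax_le => // -[i j] _ /=; rewrite (ord1 i); apply: vr.
Qed.

Lemma row_coord_norm_le n (v : 'rV[R]_n) i : `|v 0 i| <= `|v|.
Proof.
rewrite [leRHS]/Num.Def.normr /= mx_normrE.
by apply: le_trans; last exact: (le_bigmax _ _ (0, i)).
Qed.


(* Passing from row_prefix k h to row_prefix k.+1 h changes one coordinate, so
   f (h + x) - f x telescopes into increments along the coordinate axes, each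
   controlled by a partial derivative through the mean value theorem. *)
Definition row_prefix {n} (k : nat) (h : 'rV[R]_n) : 'rV[R]_n :=
  \row_j (if (j < k)%N then h 0 j else 0).

Lemma row_prefix_stepE n (k : 'I_n) (h : 'rV[R]_n) (z : R) j :
  (row_prefix k h + z *: delta_mx 0 k) 0 j =
  if (j < k)%N then h 0 j else if j == k then z else 0.
Proof.
rewrite !mxE eqxx /=; case: ltngtP => [jk|kj|/val_inj ->].
- by rewrite -val_eqE (ltn_eqF jk) mulr0 addr0.
- by rewrite -val_eqE (gtn_eqF kj) mulr0 addr0.
- by rewrite eqxx mulr1 add0r.
Qed.

Lemma row_prefixS n (k : 'I_n) (h : 'rV[R]_n) :
  row_prefix k.+1 h = row_prefix k h + h 0 k *: delta_mx 0 k.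
Proof.
apply/rowP => j; rewrite row_prefix_stepE mxE ltnS leq_eqVlt.
rewrite -[j == k :> 'I_n]val_eqE /=.
by case: ltngtP => // /val_inj ->.
Qed.

Lemma row_prefix_step_norm_le n (k : 'I_n) (h : 'rV[R]_n) (z : R) :
  `|z| <= `|h 0 k| -> `|row_prefix k h + z *: delta_mx 0 k| <= `|h|.
Proof.
move=> zh; apply: row_norm_le => // j; rewrite row_prefix_stepE.
case: ifP => _; first exact: row_coord_norm_le.
by case: eqP => _; rewrite ?normr0 // (le_trans zh) ?row_coord_norm_le.
Qed.

Lemma row_prefix_telescope n (f : 'rV[R]_n -> R) x h :
  f (h + x) - f x =
  \sum_(k < n) (f (row_prefix k.+1 h + x) - f (row_prefix k h + x)).
Proof.
rewrite -(big_mkord xpredT (fun k => f (row_prefix k.+1 h + x)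
                                   - f (row_prefix k h + x))).
rewrite telescope_sumr //.
have -> : row_prefix n h = h by apply/rowP => j; rewrite mxE ltn_ord.
have -> : row_prefix 0 h = 0 by apply/rowP => j; rewrite !mxE.
by rewrite add0r.
Qed.

Lemma row_prefix_increment_le {n} {f : 'rV[R]_n -> R} {x} {d : 'I_n -> R}
    {h : 'rV[R]_n} {del eps : R} (k : 'I_n) :
  (forall i y, derivable f y (delta_mx 0 i)) ->
  (forall y, `|x - y| < del -> forall i, `|'D_(delta_mx 0 i) f y - d i| <= eps) ->
  `|h| < del ->
  `|f (row_prefix k.+1 h + x) - f (row_prefix k h + x) - h 0 k * d k|
    <= eps * `|h|.
Proof.
move=> df near_d hdel.
have eps0 : 0 <= eps.
  by apply: le_trans (near_d x _ k); rewrite ?subrr ?normr0 ?(le_lt_trans _ hdel).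
rewrite row_prefixS [row_prefix k h + _ + x]addrAC.
have step z : `|z| <= `|h 0 k| ->
    `|'D_(delta_mx 0 k) f (row_prefix k h + x + z *: delta_mx 0 k) - d k| <= eps.
  move=> hz; apply: near_d; rewrite [_ + x + _]addrAC opprD addrCA subrr addr0.
  by rewrite normrN (le_lt_trans _ hdel) ?row_prefix_step_norm_le.
rewrite (le_trans (line_increment_le (fun z => df k _) step)) //.
by rewrite ler_wpM2l ?row_coord_norm_le.
Qed.

Lemma differentiable_of_continuous_partials n (f : 'rV[R]_n -> R) x :
  (forall i y, derivable f y (delta_mx 0 i)) ->
  (forall i, continuous (fun y => 'D_(delta_mx 0 i) f y)) ->
  differentiable f x.
Proof.
move=> df dcont.
pose d i := 'D_(delta_mx 0 i) f x.
pose s (y : 'rV[R]_n) : R := \sum_(i < n) (y 0 i - x 0 i) * d i.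
have ds : differentiable s x.
  have -> : s = \sum_(i < n) (fun y : 'rV[R]_n => (y 0 i - x 0 i) * d i).
    by apply: funext => y; rewrite fct_sumE.
  apply: differentiable_sum => i.
  have -> : (fun y : 'rV[R]_n => (y 0 i - x 0 i) * d i)
      = ((fun y : 'rV[R]_n => y 0 i) - cst (x 0 i)) * cst (d i) by [].
  by apply: differentiableM => //; apply: differentiableB => //;
    apply: differentiable_coord.
have -> : f = (f - s) + s by rewrite subrK.
apply: differentiableD => //; apply: differentiable_of_flat => eps eps0.
pose e := eps / n.+1%:R.
have near_d i : \forall y \near x, `|'D_(delta_mx 0 i) f y - d i| <= e.
  have /cvgrPdist_le /(_ e (divr_gt0 eps0 (ltr0Sn _ _))) := dcont i x.
  by apply: filterS => y; rewrite distrC.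
have /nbhs_normP[del del0 close_d] := filter_forall (nbhs_filter x) near_d.
apply/nbhs_normP; exists del => // h /=; rewrite sub0r normrN => hdel.
have -> : (f - s) (h + x) - (f - s) x =
    \sum_(k < n) (f (row_prefix k.+1 h + x) - f (row_prefix k h + x) - h 0 k * d k).
  have sx : s x = 0 by apply: big1 => i _; rewrite subrr mul0r.
  have shx : s (h + x) = \sum_(k < n) h 0 k * d k.
    by apply: eq_bigr => k _; rewrite mxE addrK.
  by rewrite sumrB -row_prefix_telescope !fctE shx sx subr0 addrAC.
apply: le_trans (ler_norm_sum _ _ _) _.
rewrite (le_trans (ler_sum _ (fun k _ => row_prefix_increment_le k df close_d hdel))) //.
rewrite sumr_const card_ord -mulr_natl mulrA ler_wpM2r // /e mulrCA ger_pMr //.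
by rewrite ler_pdivrMr ?ltr0Sn // mul1r ler_nat.
Qed.

Lemma derivable_row_of_seq n (fs : seq (R -> R)) t :
  (forall i, derivable (nth (cst 0) fs i) t 1) ->
  derivable (fun s => \row_(i < n) nth 0 [seq f s | f <- fs] i) t 1.
Proof.
move=> dfs; apply/derivable_mxP => i j.
have -> : (fun s => (\row_(i < n) nth 0 [seq f s | f <- fs] i) i j) = nth (cst 0) fs j.
  apply: funext => s; rewrite mxE.
  by elim: fs (nat_of_ord j) {dfs} => [|f fs IH] [|k] //=.
exact: dfs.
Qed.

Lemma derivable_smooth_comp n (f : 'rV[R]_n -> R) (g : R -> 'rV[R]_n) t :
  smooth f -> derivable g t 1 -> derivable (fun s => f (g s)) t 1.
Proof.
move=> sf /derivable1_diffP dg; apply/derivable1_diffP.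
apply: differentiable_comp => //; apply: differentiable_of_continuous_partials.
- by move=> i y; have [_] := sf [::]; apply.
- by move=> i; have [] := sf [:: i].
Qed.

Lemma derive1D {f g : R -> R} {t : R} : derivable f t 1 -> derivable g t 1 ->
  derive1 (fun s => f s + g s) t = derive1 f t + derive1 g t.
Proof. by move=> df dg; rewrite !derive1E; apply: deriveD. Qed.

Lemma derive1B {f g : R -> R} {t : R} : derivable f t 1 -> derivable g t 1 ->
  derive1 (fun s => f s - g s) t = derive1 f t - derive1 g t.
Proof. by move=> df dg; rewrite !derive1E; apply: deriveB. Qed.

Lemma derive1M {f g : R -> R} {t : R} : derivable f t 1 -> derivable g t 1 ->
  derive1 (fun s => f s * g s) t = derive1 f t * g t + f t * derive1 g t.
Proof.
move=> df dg; rewrite !derive1E (deriveM df dg).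
by rewrite /GRing.scale /= mulrC addrC [g t * _]mulrC.
Qed.

End RealCalculus.

Section Trajectory.
Context {R : realType} (a1 a2 a3 a4 tau : R).
Context {H : 'rV[R]_6 -> R} {xi eta : 'rV[R]_3 -> R} (nu : 'rV[R]_3 -> R).
Context {q p : R -> R}.
Hypotheses (sH : smooth H) (sxi : smooth xi) (seta : smooth eta).
Hypotheses (sq : smooth1 q) (sp : smooth1 p).

Local Notation C := (dlCfun a1 a2 a3 a4 tau H xi eta q p).
Local Notation P := (dlPfun a1 a2 a4 tau H xi eta nu q p).

Definition momentum (t : R) : R :=
  a4 * p (t + tau) + (a2 + a3) * p t + a1 * p (t - tau).

Definition delay_flux (t : R) : R :=
  a2 * (p t * qd q t - p (t - tau) * qd q (t - tau))
  + a4 * (p (t + tau) * qd q t - p t * qd q (t - tau)).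

Definition energy (t : R) : R := delay_flux t + H (pt6 tau q p t).

Lemma dlCfunE : C = fun t => cmp3 q p eta t * momentum t - cmp3 q p xi t * energy t.
Proof. by []. Qed.

Let dq t : derivable q t 1 := sq 0 t.
Let dp t : derivable p t 1 := sp 0 t.
Let dqd t : derivable (qd q) t 1 := sq 1 t.

Let dshift {g : R -> R} {c : R} :
  (forall t, derivable g t 1) -> forall t, derivable (fun s => g (s + c)) t 1.
Proof. by move=> dg t; apply: derivable_shift. Qed.

Let dpp t : derivable (fun s => p (s + tau)) t 1 := dshift dp t.
Let dpm t : derivable (fun s => p (s - tau)) t 1 := dshift dp t.
Let dqdm t : derivable (fun s => qd q (s - tau)) t 1 := dshift dqd t.

Let dscale {c : R} {f : R -> R} {t : R} :
  derivable f t 1 -> derivable (fun s => c * f s) t 1.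
Proof. exact: derivableM (derivable_cst c t 1). Qed.

Lemma derivable_pt3 t : derivable (pt3 q p) t 1.
Proof.
have -> : pt3 q p = fun s => \row_(i < 3) nth 0 [seq f s | f <- [:: id; q; p]] i.
  by [].
apply: derivable_row_of_seq => -[|[|[|i]]] /=; rewrite ?nth_nil.
- exact: derivable_id.
- exact: dq.
- exact: dp.
- exact: derivable_cst.
Qed.

Lemma derivable_pt6 t : derivable (pt6 tau q p) t 1.
Proof.
have -> : pt6 tau q p = fun s => \row_(i < 6) nth 0 [seq f s | f <-
    [:: id; fun s => s - tau; q; fun s => q (s - tau); p; fun s => p (s - tau)]] i.
  by [].
apply: derivable_row_of_seq => -[|[|[|[|[|[|i]]]]]] /=; rewrite ?nth_nil.
- exact: derivable_id.
- by apply: derivableD; [exact: derivable_id | exact: derivable_cst].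
- exact: dq.
- exact: dshift dq t.
- exact: dp.
- exact: dpm.
- exact: derivable_cst.
Qed.

Lemma derivable_cmp3 {g} : smooth g -> forall t, derivable (cmp3 q p g) t 1.
Proof. by move=> sg t; apply: derivable_smooth_comp sg (derivable_pt3 t). Qed.

Lemma derivable_sh3 {g} : smooth g -> forall t, derivable (sh3 tau q p g) t 1.
Proof. by move=> sg t; exact: dshift (derivable_cmp3 sg) t. Qed.

Lemma derivable_H_pt6 t : derivable (fun s => H (pt6 tau q p s)) t 1.
Proof. exact: derivable_smooth_comp sH (derivable_pt6 t). Qed.

Lemma derivable_momentum t : derivable momentum t 1.
Proof.
apply: derivableD; first apply: derivableD.
- exact: dscale (dpp t).
- exact: dscale (dp t).
- exact: dscale (dpm t).
Qed.

Lemma derive1_momentum t :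
  derive1 momentum t =
  a4 * pd p (t + tau) + (a2 + a3) * pd p t + a1 * pd p (t - tau).
Proof.
rewrite /momentum !derive1D ?derive1Ml ?derive1_shift; first by [].
- exact: dpm.
- exact: dp.
- exact: dpp.
- exact: dscale (dpp t).
- exact: dscale (dp t).
- by apply: derivableD; [exact: dscale (dpp t) | exact: dscale (dp t)].
- exact: dscale (dpm t).
Qed.

Lemma derivable_delay_flux t : derivable delay_flux t 1.
Proof.
apply: derivableD; apply: dscale; apply: derivableB; apply: derivableM.
- exact: dp.
- exact: dqd.
- exact: dpm.
- exact: dqdm.
- exact: dpp.
- exact: dqd.
- exact: dp.
- exact: dqdm.
Qed.

Lemma derivable_energy t : derivable energy t 1.
Proof. by apply: derivableD; [exact: derivable_delay_flux | exact: derivable_H_pt6]. Qed.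

Lemma derive1_energy t :
  derive1 energy t =
  derive1 delay_flux t + derive1 (fun s => H (pt6 tau q p s)) t.
Proof. exact: derive1D (derivable_delay_flux t) (derivable_H_pt6 t). Qed.

Lemma derivable_dlCfun t : derivable C t 1.
Proof.
rewrite dlCfunE; apply: derivableB; apply: derivableM.
- exact (derivable_cmp3 seta t).
- exact: derivable_momentum.
- exact (derivable_cmp3 sxi t).
- exact: derivable_energy.
Qed.

Lemma derive1_dlCfun t :
  derive1 C t =
  derive1 (cmp3 q p eta) t * momentum t + cmp3 q p eta t * derive1 momentum t
  - (derive1 (cmp3 q p xi) t * energy t + cmp3 q p xi t * derive1 energy t).
Proof.
have dE := derivable_cmp3 seta t; have dX := derivable_cmp3 sxi t.
have dEm := derivableM dE (derivable_momentum t).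
have dXe := derivableM dX (derivable_energy t).
rewrite dlCfunE (derive1B dEm dXe) (derive1M dE (derivable_momentum t)).
by rewrite (derive1M dX (derivable_energy t)).
Qed.

Lemma sh3_shift g t : sh3 tau q p g (t + tau) = cmp3 q p g t.
Proof. by rewrite /sh3 addrK. Qed.

Lemma derive1_sh3_shift g t :
  derive1 (sh3 tau q p g) (t + tau) = derive1 (cmp3 q p g) t.
Proof. by rewrite (derive1_shift (cmp3 q p g) (- tau)) addrK. Qed.

Lemma derive1_dlCfun_noether t :
  derive1 C t = P (t + tau) - P t
                + dlOmega a1 a2 a3 a4 tau H xi eta nu q p t
                - dlFH a1 a2 a3 a4 tau H xi eta nu q p t.
Proof.
rewrite derive1_dlCfun derive1_momentum derive1_energy.
rewrite /dlOmega /dlFH /dHt_dt /dHt_dq /dHt_dp.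
rewrite (derive1B (derivable_cmp3 sxi t) (derivable_sh3 sxi t)).
rewrite /dlPfun !addrK !sh3_shift !derive1_sh3_shift /momentum /energy /delay_flux.
(* Abstracting the partial derivatives of H keeps ring from trying to identify
   them by unfolding inord. *)
move: (dlHk tau H q p) => Hk.
ring.
Qed.

Lemma is_derive_dlCfun t :
  is_derive t (1 : R) C (P (t + tau) - P t
                         + dlOmega a1 a2 a3 a4 tau H xi eta nu q p t
                         - dlFH a1 a2 a3 a4 tau H xi eta nu q p t).
Proof.
rewrite -derive1_dlCfun_noether derive1E.
exact: derivableP (derivable_dlCfun t).
Qed.

End Trajectory.

(* The identity behind is_derive_dlCfun holds for every delay and is linear in
   the values of nu, so neither 0 < tau nor the smoothness of nu is used. *)
Theorem proposition1 (R : realType) (a1 a2 a3 a4 tau : R)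
  (H : 'rV[R]_6 -> R) (xi eta nu : 'rV[R]_3 -> R) (V : 'rV[R]_9 -> R) :
  0 < tau ->
  smooth H -> smooth xi -> smooth eta -> smooth nu ->
  (* dlOmega = 0 (identically, i.e. along every smooth trajectory) *)
  (forall q p : R -> R, smooth1 q -> smooth1 p ->
     forall t : R, dlOmega a1 a2 a3 a4 tau H xi eta nu q p t = 0) ->
  (* (S_+ - 1) P = D(V) on the solutions of F_H = 0 *)
  (forall q p : R -> R, smooth1 q -> smooth1 p ->
     (forall t : R, dlFH a1 a2 a3 a4 tau H xi eta nu q p t = 0) ->
     forall t : R, is_derive t (1 : R) (dlVfun tau q p V)
       (dlPfun a1 a2 a4 tau H xi eta nu q p (t + tau)
        - dlPfun a1 a2 a4 tau H xi eta nu q p t)) ->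
  (* then D(C - V) = 0 on the solutions of F_H = 0 *)
  forall q p : R -> R, smooth1 q -> smooth1 p ->
    (forall t : R, dlFH a1 a2 a3 a4 tau H xi eta nu q p t = 0) ->
    forall t : R, is_derive t (1 : R)
      (fun s => dlCfun a1 a2 a3 a4 tau H xi eta q p s - dlVfun tau q p V s) 0.
Proof.
move=> _ sH sxi seta _ Omega0 DV q p sq sp FH0 t.
have DC := is_derive_dlCfun a1 a2 a3 a4 tau nu sH sxi seta sq sp t.
apply: (is_derive_eq (is_deriveB DC (DV q p sq sp FH0 t))).
by rewrite (Omega0 q p sq sp t) (FH0 t) addr0 subr0 subrr.
Qed.
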